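(* Let $\mathcal G\in\mathbb C^{M\times N}$ have columns $\mathbf g_1,\dots,\mathbf g_N$ with $\|\mathbf g_j\|_2=1$, let $\mathbf d\in\mathbb C^M$, $\gamma>0$, and $\mathscr L(\boldsymbol\rho)=\tfrac12\|\mathcal G\boldsymbol\rho-\mathbf d\|_2^2+\gamma\|\boldsymbol\rho\|_1$. Let $\mathscr S\subset\{1,\dots,N\}$ with complement $\mathscr S^c=\{1,\dots,N\}\setminus\mathscr S$, let $\mathcal S\subset\mathscr S$ be such that $\mathcal G_{\mathcal S}$ has full column rank, and let $r\in(0,1)$ be such that for every $l\in\mathscr S$ there is $q\in\mathcal S$ with $|\mathbf g_q^H\mathbf g_l|>1-r$. Let $\boldsymbol\rho_\star$ minimize $\mathscr L$ over all $\boldsymbol\rho\in\mathbb C^N$ with $\operatorname{supp}\boldsymbol\rho\subset\mathscr S$, and let $\boldsymbol\xi\in\partial\|\boldsymbol\rho_{\star\mathscr S}\|_1$ satisfy $\mathcal G_{\mathscr S}^H\mathcal G_{\mathscr S}(\boldsymbol\rho_{\star\mathscr S}-\mathcal G_{\mathscr S}^\dagger\mathbf d)+\gamma\boldsymbol\xi=\mathbf 0$. If $$\sqrt{2r}\,\|\boldsymbol\rho_{\star\mathscr S}-\mathcal G_{\mathscr S}^\dagger\mathbf d\|_1+\|\mathcal G_{\mathscr S^c}^H(\mathcal P_{\mathscr S}\mathbf d-\mathbf d)\|_\infty<\gamma\Big[1-\max_{j\in\mathscr S^c}\big|\boldsymbol\xi_{\mathcal S}^H\,\mathcal G_{\mathcal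 S}^\dagger\mathbf g_j\big|\Big],$$ then $\boldsymbol\rho_\star$ is a global minimizer of $\mathscr L$ over $\mathbb C^N$.
   Context: For $\mathbf u\in\mathbb C^N$ and $T\subset\{1,\dots,N\}$, $\mathbf u_T\in\mathbb C^{|T|}$ denotes the restriction of $\mathbf u$ to the indices in $T$ (for $\boldsymbol\xi$ indexed by $\mathscr S$, $\boldsymbol\xi_{\mathcal S}$ is its restriction to $\mathcal S$), and $\mathcal G_T$ is the $M\times|T|$ submatrix of $\mathcal G$ with columns $\mathbf g_j$, $j\in T$. $^H$ denotes conjugate transpose, $^\dagger$ the Moore–Penrose pseudo-inverse, and $\mathcal P_{\mathscr S}=\mathcal G_{\mathscr S}\mathcal G_{\mathscr S}^\dagger$ the orthogonal projection onto the range of $\mathcal G_{\mathscr S}$. Subdifferential of the $\ell_1$ norm at $\mathbf u\in\mathbb C^n$: $\partial\|\mathbf u\|_1=\{\boldsymbol\xi\in\mathbb C^n:\ \xi_i=u_i/|u_i|\text{ if }u_i\neq0,\ |\xi_i|\le1\text{ if }u_i=0\}$. *)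

(* The complex field is modelled by an arbitrary
   numClosedFieldType C (e.g. algC). *)
From HB Require Import structures.
From mathcomp Require Import all_boot all_order all_algebra.
Set Implicit Arguments. Unset Strict Implicit. Unset Printing Implicit Defensive.
Import Order.TTheory GRing.Theory Num.Theory.
Local Open Scope ring_scope.

Section Defs.
Variable C : numClosedFieldType.

Definition ctrmx m n (A : 'M[C]_(m, n)) : 'M[C]_(n, m) :=
  \matrix_(i, j) Num.conj (A j i).

Definition colsubset m n (T : {set 'I_n}) (G : 'M[C]_(m, n)) : 'M[C]_(m, #|T|) :=
  \matrix_(i, k) G i (enum_val k).

Definition restr n (T : {set 'I_n}) (u : 'cV[C]_n) : 'cV[C]_#|T| :=
  \col_k u (enum_val k) 0.

Definition extend n (T : {set 'I_n}) (v : 'cV[C]_#|T|) : 'cV[C]_n :=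
  \col_j \sum_(k < #|T|) (if enum_val k == j then v k 0 else 0).

Definition norm1 n (u : 'cV[C]_n) : C := \sum_i `|u i 0|.
Definition norm2sq n (u : 'cV[C]_n) : C := \sum_i `|u i 0| ^+ 2.
Definition norminf n (u : 'cV[C]_n) : C := \big[Num.max/0]_i `|u i 0|.

(* Moore-Penrose pseudo-inverse, via the Penrose equations *)
Definition is_pinv m n (A : 'M[C]_(m, n)) (X : 'M[C]_(n, m)) : Prop :=
  [/\ A *m X *m A = A, X *m A *m X = X,
      ctrmx (A *m X) = A *m X & ctrmx (X *m A) = X *m A].

Definition in_subdiff_l1 n (u xi : 'cV[C]_n) : Prop :=
  forall i, (u i 0 != 0 -> xi i 0 = u i 0 / `|u i 0|) /\
            (u i 0 = 0 -> `|xi i 0| <= 1).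

Definition lassoL m n (G : 'M[C]_(m, n)) (d : 'cV[C]_m) (gamma : C)
  (rho : 'cV[C]_n) : C :=
  2^-1 * norm2sq (G *m rho - d) + gamma * norm1 rho.

End Defs.

From HB Require Import structures.
From mathcomp Require Import all_boot all_order all_algebra ring.
Import Order.TTheory GRing.Theory Num.Theory.
Local Open Scope ring_scope.
Set Implicit Arguments. Unset Strict Implicit. Unset Printing Implicit Defensive.

(* The lasso objective is convex, so rho_star is a global minimizer as soon as
   G^H (G rho_star - d) + gamma x = 0 for some x in the l1-subdifferential at
   rho_star.  On the support S the KKT condition provides x = xi; off S it
   suffices that every column g_j has correlation less than gamma with the
   residual.  Split the residual as G_S e + z, with e = rho_S - G_S^+ d and z
   orthogonal to the range of G_S, and let P project onto the range of G_T
   (T = script S of the paper).  By the KKT condition the correlation of g_j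
   with P G_S e is gamma |xi_T^H G_T^+ g_j|; each column of G_S lies within
   sqrt(2r) of a phase multiple of a column of G_T, so (1 - P) G_S e
   contributes at most sqrt(2r) |e|_1; z contributes the sup-norm term. *)

Lemma ler_bigmax_nneg (R : numDomainType) (I : finType) (P : pred I) (F : I -> R) i :
  (forall j, 0 <= F j) -> P i -> F i <= \big[Num.max/0]_(j | P j) F j.
Proof.
have max_ge0 (x y : R) : 0 <= x -> 0 <= y -> 0 <= Num.max x y.
  by move=> x0 y0; rewrite comparable_le_max ?x0 ?real_comparable ?ger0_real.
move=> F0 Pi; rewrite -big_filter.
have : i \in [seq j <- index_enum I | P j] by rewrite mem_filter Pi mem_index_enum.
elim: [seq j <- _ | _] => // a r IH; rewrite in_cons big_cons.
have Fr_ge0 : 0 <= \big[Num.max/0]_(j <- r) F j by apply: (big_ind (fun x => 0 <= x)).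
rewrite comparable_le_max ?real_comparable ?ger0_real //.
by case/orP=> [/eqP <-|/IH ->]; rewrite ?lexx ?orbT.
Qed.

Section Hermitian.
Variable C : numClosedFieldType.

Lemma ctrmxE m n (A : 'M[C]_(m, n)) : ctrmx A = (map_mx Num.conj A)^T.
Proof. by apply/matrixP => i j; rewrite !mxE. Qed.

Lemma ctrmx_mul m n p (A : 'M[C]_(m, n)) (B : 'M[C]_(n, p)) :
  ctrmx (A *m B) = ctrmx B *m ctrmx A.
Proof. by rewrite !ctrmxE map_mxM trmx_mul. Qed.

Lemma ctrmxK m n (A : 'M[C]_(m, n)) : ctrmx (ctrmx A) = A.
Proof. by apply/matrixP => i j; rewrite !mxE conjCK. Qed.

Lemma ctrmxD m n (A B : 'M[C]_(m, n)) : ctrmx (A + B) = ctrmx A + ctrmx B.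
Proof. by apply/matrixP => i j; rewrite !mxE rmorphD. Qed.

Lemma ctrmxN m n (A : 'M[C]_(m, n)) : ctrmx (- A) = - ctrmx A.
Proof. by apply/matrixP => i j; rewrite !mxE rmorphN. Qed.

Lemma ctrmxZ m n a (A : 'M[C]_(m, n)) : ctrmx (a *: A) = a^* *: ctrmx A.
Proof. by apply/matrixP => i j; rewrite !mxE rmorphM. Qed.

Lemma ctrmx0 m n : ctrmx (0 : 'M[C]_(m, n)) = 0.
Proof. by apply/matrixP => i j; rewrite !mxE conjC0. Qed.

Lemma ctrmx1 n : ctrmx (1%:M : 'M[C]_n) = 1%:M.
Proof.
by apply/matrixP => i j; rewrite !mxE eq_sym; case: eqP; rewrite ?conjC1 ?conjC0.
Qed.

Definition dot m (u v : 'cV[C]_m) : C := (ctrmx u *m v) 0 0.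

Lemma dotE m (u v : 'cV[C]_m) : dot u v = \sum_i (u i 0)^* * v i 0.
Proof. by rewrite /dot mxE; apply: eq_bigr => i _; rewrite mxE. Qed.

Lemma dotDr m (u v w : 'cV[C]_m) : dot u (v + w) = dot u v + dot u w.
Proof. by rewrite /dot mulmxDr mxE. Qed.

Lemma dotDl m (u v w : 'cV[C]_m) : dot (v + w) u = dot v u + dot w u.
Proof. by rewrite /dot ctrmxD mulmxDl mxE. Qed.

Lemma dotBr m (u v w : 'cV[C]_m) : dot u (v - w) = dot u v - dot u w.
Proof. by rewrite /dot mulmxBr !mxE. Qed.

Lemma dotBl m (u v w : 'cV[C]_m) : dot (v - w) u = dot v u - dot w u.
Proof. by rewrite /dot ctrmxD ctrmxN mulmxBl !mxE. Qed.

Lemma dotZr m a (u v : 'cV[C]_m) : dot u (a *: v) = a * dot u v.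
Proof. by rewrite /dot -scalemxAr mxE. Qed.

Lemma dotZl m a (u v : 'cV[C]_m) : dot (a *: v) u = a^* * dot v u.
Proof. by rewrite /dot ctrmxZ -scalemxAl mxE. Qed.

Lemma dot0l m (u : 'cV[C]_m) : dot 0 u = 0.
Proof. by rewrite /dot ctrmx0 mul0mx mxE. Qed.

Lemma dotC m (u v : 'cV[C]_m) : dot v u = (dot u v)^*.
Proof.
rewrite !dotE rmorph_sum; apply: eq_bigr => i _.
by rewrite rmorphM /= conjCK mulrC.
Qed.

Lemma dot_mulmxr m n (A : 'M[C]_(m, n)) u v : dot u (A *m v) = dot (ctrmx A *m u) v.
Proof. by rewrite /dot ctrmx_mul ctrmxK mulmxA. Qed.

Lemma dot_sumr m I (r : seq I) (P : pred I) (u : 'cV[C]_m) (F : I -> 'cV[C]_m) :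
  dot u (\sum_(i <- r | P i) F i) = \sum_(i <- r | P i) dot u (F i).
Proof. by rewrite /dot mulmx_sumr summxE. Qed.

Lemma dot_norm2sq m (u : 'cV[C]_m) : dot u u = norm2sq u.
Proof. by rewrite dotE; apply: eq_bigr => i _; rewrite normCKC. Qed.

Lemma dot_ge0 m (u : 'cV[C]_m) : 0 <= dot u u.
Proof. by rewrite dot_norm2sq; apply: sumr_ge0 => i _; apply: exprn_ge0. Qed.

Lemma norm2sqD m (u v : 'cV[C]_m) :
  norm2sq (u + v) = norm2sq u + 2 * 'Re (dot u v) + norm2sq v.
Proof. by rewrite -!dot_norm2sq dotDl !dotDr (dotC u v) ReE; field. Qed.

Lemma ctrmx_mulmxE m n (A : 'M[C]_(m, n)) (z : 'cV[C]_m) j :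
  (ctrmx A *m z) j 0 = dot (col j A) z.
Proof. by rewrite dotE mxE; apply: eq_bigr => i _; rewrite !mxE. Qed.

Lemma cauchy_schwarz_unit m (g v : 'cV[C]_m) :
  dot g g = 1 -> `|dot g v| ^+ 2 <= dot v v.
Proof.
move=> g1; set s := dot g v.
have := dot_ge0 (v - s *: g).
rewrite dotBl !dotBr !dotZl !dotZr g1 -/s mulr1 (dotC g v) -/s subrr subr0.
by rewrite normCK subr_ge0.
Qed.

Lemma dot_sub_phase m (u v : 'cV[C]_m) :
  dot u u = 1 -> dot v v = 1 -> dot u v != 0 ->
  exists c, dot (v - c *: u) (v - c *: u) = 2 * (1 - `|dot u v|).
Proof.
move=> u1 v1; set t := dot u v => t_neq0.
have nt_neq0 : `|t| != 0 by rewrite normr_eq0.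
have tt : t * t^* = `|t| ^+ 2 by rewrite normCK.
have conj_phase : (t / `|t|)^* = t^* / `|t|.
  by rewrite rmorphM /= rmorphV ?unitfE //; congr (_ * _^-1); exact: conj_normC.
exists (t / `|t|).
rewrite dotBl !dotBr !dotZl !dotZr u1 v1 mulr1 (dotC u v) -/t conj_phase.
have -> : t / `|t| * t^* = `|t| by rewrite mulrAC tt expr2 mulfK.
have -> : t^* / `|t| * t = `|t| by rewrite mulrAC [t^* * t]mulrC tt expr2 mulfK.
have -> : t^* / `|t| * (t / `|t|) = 1.
  by rewrite mulrACA [t^* * t]mulrC tt -invfM -expr2 mulfV // expf_neq0.
ring.
Qed.

Section OrthoProjection.
Variables (m : nat) (P : 'M[C]_m).
Hypotheses (P_herm : ctrmx P = P) (P_idem : P *m P = P).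

Lemma dot_orthoproj_compl_le (v : 'cV[C]_m) :
  dot ((1%:M - P) *m v) ((1%:M - P) *m v) <= dot v v.
Proof.
set Q := 1%:M - P.
have Q_herm : ctrmx Q = Q by rewrite /Q ctrmxD ctrmxN ctrmx1 P_herm.
have QP : Q *m P = 0 by rewrite /Q mulmxBl mul1mx P_idem subrr.
have PQ : P *m Q = 0 by rewrite /Q mulmxBr mulmx1 P_idem subrr.
have v_split : v = Q *m v + P *m v by rewrite /Q mulmxBl mul1mx subrK.
have QvPv : dot (Q *m v) (P *m v) = 0 by rewrite dot_mulmxr mulmxA P_herm PQ mul0mx dot0l.
have PvQv : dot (P *m v) (Q *m v) = 0 by rewrite dot_mulmxr mulmxA Q_herm QP mul0mx dot0l.
rewrite {3 4}v_split dotDl !dotDr QvPv PvQv addr0 add0r.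
by rewrite lerDl dot_ge0.
Qed.

(* [(1 - P)] annihilates [u], so [v] may first be replaced by its difference
   with the closest phase multiple of [u]. *)
Lemma dot_orthoproj_compl_sqr_le (g u v : 'cV[C]_m) :
  P *m u = u -> dot g g = 1 -> dot u u = 1 -> dot v v = 1 -> dot u v != 0 ->
  `|dot g ((1%:M - P) *m v)| ^+ 2 <= 2 * (1 - `|dot u v|).
Proof.
move=> Pu g1 u1 v1 uv_neq0; have [c <-] := dot_sub_phase u1 v1 uv_neq0.
have -> : (1%:M - P) *m v = (1%:M - P) *m (v - c *: u).
  by rewrite mulmxBr -scalemxAr [(1%:M - P) *m u]mulmxBl mul1mx Pu subrr scaler0 subr0.
apply: le_trans (cauchy_schwarz_unit _ g1) _.
exact: dot_orthoproj_compl_le.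
Qed.

End OrthoProjection.

Lemma pinv_orthoproj_idem m n (A : 'M[C]_(m, n)) X :
  is_pinv A X -> (A *m X) *m (A *m X) = A *m X.
Proof. by case=> AXA _ _ _; rewrite mulmxA AXA. Qed.

Lemma pinv_ctrmx_gram m n (A : 'M[C]_(m, n)) X :
  is_pinv A X -> ctrmx A *m A *m X = ctrmx A.
Proof. by case=> AXA _ AX_herm _; rewrite -mulmxA -AX_herm -ctrmx_mul AXA. Qed.

(* Subgradient inequality of the modulus, C being R^2 with the inner product
   Re (s^* x). *)
Lemma Re_subgrad_norm (s x y : C) : `|s| <= 1 -> (x != 0 -> s = x / `|x|) ->
  'Re (s^* * (y - x)) <= `|y| - `|x|.
Proof.
move=> s1 sx.
have sxE : s^* * x = `|x|.
  have [->|x0] := eqVneq x 0; first by rewrite mulr0 normr0.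
  have inv_real : (`|x|^-1)^* = `|x|^-1 by apply: conj_Creal; rewrite realV normr_real.
  by rewrite (sx x0) rmorphM /= inv_real mulrAC -normCKC expr2 mulfK // normr_eq0.
rewrite mulrBr sxE raddfB /= (Creal_ReP _ (normr_real x)) lerD2r.
apply: le_trans (leif_Re_Creal _) _.
by rewrite normrM norm_conjC ler_piMl.
Qed.

Lemma Re_dot_subdiff_l1 n (rho x rho' : 'cV[C]_n) : in_subdiff_l1 rho x ->
  'Re (dot x (rho' - rho)) <= norm1 rho' - norm1 rho.
Proof.
move=> subdiff; rewrite dotE raddf_sum /norm1 -sumrB; apply: ler_sum => j _.
have [x_sgn x_le1] := subdiff j.
rewrite !mxE; apply: Re_subgrad_norm => [|/x_sgn //].
have [/x_le1 //|rho_nz] := eqVneq (rho j 0) 0.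
by rewrite (x_sgn rho_nz) normf_div normr_id divff ?normr_eq0.
Qed.

Lemma lasso_min_of_subgradient m n (G : 'M[C]_(m, n)) (d : 'cV[C]_m) (gamma : C)
  (rho x : 'cV[C]_n) :
  0 <= gamma -> in_subdiff_l1 rho x ->
  ctrmx G *m (G *m rho - d) + gamma *: x = 0 ->
  forall rho', lassoL G d gamma rho <= lassoL G d gamma rho'.
Proof.
move=> gamma_ge0 subdiff opt rho'.
have gamma_real : gamma \is Num.real by apply: ger0_real.
set res := G *m rho - d; set h := rho' - rho.
have res_h : G *m rho' - d = res + G *m h.
  by rewrite /res /h mulmxBr [RHS]addrC -addrA addKr.
have grad : dot res (G *m h) = - gamma * dot x h.
  rewrite dot_mulmxr (_ : ctrmx G *m res = - gamma *: x); last first.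
    by apply/eqP; rewrite scaleNr -addr_eq0 opt.
  by rewrite dotZl rmorphN /= conj_Creal.
rewrite /lassoL res_h (norm2sqD res) grad ReMl ?rpredN // -subr_ge0.
have -> : 2^-1 * (norm2sq res + 2 * (- gamma * 'Re (dot x h)) + norm2sq (G *m h))
    + gamma * norm1 rho' - (2^-1 * norm2sq (G *m rho - d) + gamma * norm1 rho)
    = 2^-1 * norm2sq (G *m h) + gamma * (norm1 rho' - norm1 rho - 'Re (dot x h)).
  by rewrite /res; field.
apply: addr_ge0; first by rewrite -dot_norm2sq mulr_ge0 ?dot_ge0 ?invr_ge0 ?ler0n.
by rewrite mulr_ge0 // subr_ge0 Re_dot_subdiff_l1.
Qed.

End Hermitian.

Section ColumnSubsets.
Variables (C : numClosedFieldType) (m n : nat) (G : 'M[C]_(m, n)) (T : {set 'I_n}).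

Lemma col_colsubset k : col k (colsubset T G) = col (enum_val k) G.
Proof. by apply/matrixP => i j; rewrite !mxE. Qed.

Lemma ctrmx_colsubset_mulmxE (z : 'cV[C]_m) k :
  (ctrmx (colsubset T G) *m z) k 0 = (ctrmx G *m z) (enum_val k) 0.
Proof. by rewrite !ctrmx_mulmxE col_colsubset. Qed.

Lemma extend_enum_val (v : 'cV[C]_#|T|) k : extend v (enum_val k) 0 = v k 0.
Proof.
rewrite mxE (bigD1 k) //= eqxx big1 ?addr0 // => k' k'_neq.
by rewrite (inj_eq enum_val_inj) (negbTE k'_neq).
Qed.

Lemma mulmx_colsubset_restr (rho : 'cV[C]_n) :
  (forall j, j \notin T -> rho j 0 = 0) ->
  G *m rho = colsubset T G *m restr T rho.
Proof.
move=> rho_supp; apply/matrixP => i k; rewrite (ord1 k) !mxE (bigID [in T]) /=.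
rewrite [X in _ + X]big1 ?addr0 => [|j /rho_supp ->]; last by rewrite mulr0.
by rewrite (big_enum_val (fun j => G i j * rho j 0)); apply: eq_bigr => l _; rewrite !mxE.
Qed.

Lemma colsubset_mulmx_sum (v : 'cV[C]_#|T|) :
  colsubset T G *m v = \sum_k v k 0 *: col (enum_val k) G.
Proof.
apply/matrixP => i j; rewrite (ord1 j) !mxE summxE; apply: eq_bigr => k _.
by rewrite !mxE mulrC.
Qed.

End ColumnSubsets.

Section LassoCertificate.
Variables (C : numClosedFieldType) (M N : nat) (G : 'M[C]_(M, N)) (d : 'cV[C]_M).
Variables (gamma r : C) (S T : {set 'I_N}).
Variables (X : 'M[C]_(#|S|, M)) (Y : 'M[C]_(#|T|, M)).
Variables (rho : 'cV[C]_N) (xi : 'cV[C]_#|S|).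

Local Notation GS := (colsubset S G).
Local Notation GT := (colsubset T G).
Local Notation P := (GT *m Y).
Local Notation res := (G *m rho - d).
Local Notation coef_err := (restr S rho - X *m d).
Local Notation res_range := (GS *m coef_err).
Local Notation res_perp := (GS *m X *m d - d).

Hypothesis G_unit : forall j : 'I_N, \sum_i `|G i j| ^+ 2 = 1.
Hypothesis gamma_gt0 : 0 < gamma.
Hypothesis T_sub_S : T \subset S.
Hypothesis r_lt1 : r < 1.
Hypothesis T_close : forall l, l \in S -> exists2 q, q \in T &
  1 - r < `|\sum_i Num.conj (G i q) * G i l|.
Hypothesis X_pinv : is_pinv GS X.
Hypothesis Y_pinv : is_pinv GT Y.
Hypothesis rho_supp : forall j, j \notin S -> rho j 0 = 0.
Hypothesis xi_subdiff : in_subdiff_l1 (restr S rho) xi.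
Hypothesis kkt : ctrmx GS *m GS *m coef_err + gamma *: xi = 0.

Lemma dot_col1 j : dot (col j G) (col j G) = 1.
Proof. by rewrite dot_norm2sq -(G_unit j); apply: eq_bigr => i _; rewrite mxE. Qed.

Lemma residual_split : res = res_range + res_perp.
Proof. by rewrite (mulmx_colsubset_restr G rho_supp) mulmxBr mulmxA addrA subrK. Qed.

Lemma ctrmx_GS_res_perp : ctrmx GS *m res_perp = 0.
Proof. by rewrite mulmxBr !mulmxA (pinv_ctrmx_gram X_pinv) subrr. Qed.

Lemma ctrmx_GS_res_range : ctrmx GS *m res_range = - gamma *: xi.
Proof. by apply/eqP; rewrite scaleNr -addr_eq0 mulmxA kkt. Qed.

Lemma ctrmx_GS_res : ctrmx GS *m res = - gamma *: xi.
Proof. by rewrite residual_split mulmxDr ctrmx_GS_res_perp addr0 ctrmx_GS_res_range. Qed.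

Lemma ctrmx_GT_res_range : ctrmx GT *m res_range = - gamma *: restr T (extend xi).
Proof.
apply/matrixP => k i; rewrite (ord1 i) ctrmx_colsubset_mulmxE.
have kS : enum_val k \in S by apply: (subsetP T_sub_S); apply: enum_valP.
rewrite -(enum_rankK_in kS kS) -ctrmx_colsubset_mulmxE ctrmx_GS_res_range.
by rewrite [LHS]mxE [RHS]mxE [restr _ _ _ _]mxE -[in RHS](enum_rankK_in kS kS) extend_enum_val.
Qed.

Lemma dot_col_proj_res_range j : `|dot (col j G) (P *m res_range)|
  = gamma * `|(ctrmx (restr T (extend xi)) *m Y *m col j G) 0 0|.
Proof.
have [_ _ P_herm _] := Y_pinv.
rewrite -P_herm ctrmx_mul -mulmxA dot_mulmxr ctrmxK ctrmx_GT_res_range dotZr.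
by rewrite normrM normrN (gtr0_norm gamma_gt0) dotC norm_conjC /dot -mulmxA ctrmx_mulmxE.
Qed.

Lemma dot_col_compl_col j l : l \in S ->
  `|dot (col j G) ((1%:M - P) *m col l G)| <= sqrtC (2 * r).
Proof.
move=> lS; have [q qT close_ql] := T_close lS.
have [GTYGT _ P_herm _] := Y_pinv.
have Pq : P *m col q G = col q G.
  have -> : col q G = GT *m delta_mx (enum_rank_in qT q) 0.
    by rewrite -colE col_colsubset enum_rankK_in.
  by rewrite mulmxA GTYGT.
set t := dot (col q G) (col l G).
have tE : t = \sum_i Num.conj (G i q) * G i l.
  by rewrite /t dotE; apply: eq_bigr => i _; rewrite !mxE.
rewrite -tE in close_ql.
have t_nz : t != 0.
  by rewrite -normr_gt0; apply: le_lt_trans close_ql; rewrite subr_ge0 ltW.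
have sq_le := dot_orthoproj_compl_sqr_le P_herm (pinv_orthoproj_idem Y_pinv) Pq
  (dot_col1 j) (dot_col1 q) (dot_col1 l) t_nz.
have t_r : 2 * (1 - `|t|) <= 2 * r by rewrite ler_pM2l ?ltr0n // lerBlDl -lerBlDr ltW.
have r_ge0 : 0 <= 2 * r by apply: le_trans t_r; apply: le_trans sq_le; exact: exprn_ge0.
by rewrite -(sqrCK (normr_ge0 _)) ler_sqrtC ?qualifE /= ?exprn_ge0 // (le_trans sq_le t_r).
Qed.

Lemma dot_col_compl_res_range j :
  `|dot (col j G) ((1%:M - P) *m res_range)| <= sqrtC (2 * r) * norm1 coef_err.
Proof.
rewrite colsubset_mulmx_sum mulmx_sumr dot_sumr.
apply: le_trans (ler_norm_sum _ _ _) _.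
rewrite /norm1 mulr_sumr; apply: ler_sum => k _.
rewrite -scalemxAr dotZr normrM mulrC ler_wpM2r //.
exact: dot_col_compl_col (enum_valP k).
Qed.

Lemma dot_col_res_perp j : j \notin S ->
  `|dot (col j G) res_perp| <= norminf (ctrmx (colsubset (~: S) G) *m res_perp).
Proof.
rewrite -in_setC => jS'.
rewrite -ctrmx_mulmxE -(enum_rankK_in jS' jS') -ctrmx_colsubset_mulmxE.
exact: ler_bigmax_nneg.
Qed.

Hypothesis certificate :
  sqrtC (2 * r) * norm1 coef_err
    + norminf (ctrmx (colsubset (~: S) G) *m res_perp)
  < gamma * (1 - \big[Num.max/0]_(j in ~: S)
       `|(ctrmx (restr T (extend xi)) *m Y *m col j G) 0 0|).

Lemma corr_off_support_lt j : j \notin S -> `|(ctrmx G *m res) j 0| < gamma.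
Proof.
move=> jS; have cert := certificate.
set mx := \big[Num.max/0]_(i in ~: S) _ in cert.
have range_split : res_range = P *m res_range + (1%:M - P) *m res_range.
  by rewrite mulmxBl mul1mx [RHS]addrC subrK.
have corr_le : `|(ctrmx G *m res) j 0| <= gamma * mx
    + (sqrtC (2 * r) * norm1 coef_err + norminf (ctrmx (colsubset (~: S) G) *m res_perp)).
  rewrite ctrmx_mulmxE residual_split dotDr {1}range_split dotDr.
  apply: le_trans (ler_normD _ _) _; rewrite addrA lerD ?dot_col_res_perp //.
  apply: le_trans (ler_normD _ _) _; rewrite lerD ?dot_col_compl_res_range //.
  rewrite dot_col_proj_res_range; apply: ler_wpM2l; first exact: ltW.
  by apply: ler_bigmax_nneg; rewrite ?in_setC.
apply: le_lt_trans corr_le _; rewrite -ltrBrDl.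
by apply: lt_le_trans cert _; rewrite mulrBr mulr1.
Qed.

Lemma exists_full_subgradient :
  exists x, in_subdiff_l1 rho x /\ ctrmx G *m res + gamma *: x = 0.
Proof.
have gamma_neq0 : gamma != 0 by rewrite gt_eqF.
set corr := ctrmx G *m res.
have corr_S k : corr (enum_val k) 0 = - gamma * xi k 0.
  by rewrite -ctrmx_colsubset_mulmxE ctrmx_GS_res mxE.
exists (\col_j (if j \in S then extend xi j 0 else - gamma^-1 * corr j 0)); split.
- move=> j; rewrite mxE; case: ifPn => jS.
    rewrite -(enum_rankK_in jS jS) extend_enum_val.
    by have := xi_subdiff (enum_rank_in jS j); rewrite mxE.
  rewrite rho_supp // eqxx; split=> // _.
  rewrite normrM normrN normfV (gtr0_norm gamma_gt0) mulrC ler_pdivrMr // mul1r.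
  exact/ltW/corr_off_support_lt.
- apply/matrixP => j i; rewrite (ord1 i) [LHS]mxE [X in _ + X]mxE [X in gamma * X]mxE [RHS]mxE.
  case: ifPn => jS; last by field.
  by rewrite -(enum_rankK_in jS jS) extend_enum_val corr_S mulNr addNr.
Qed.

End LassoCertificate.

Theorem lemma4 (C : numClosedFieldType) (M N : nat)
  (G : 'M[C]_(M, N)) (d : 'cV[C]_M) (gamma : C)
  (SS Scal : {set 'I_N}) (r : C)
  (X : 'M[C]_(#|SS|, M)) (Y : 'M[C]_(#|Scal|, M))
  (rho_star : 'cV[C]_N) (xi : 'cV[C]_#|SS|) :
  (forall j : 'I_N, \sum_i `|G i j| ^+ 2 = 1) ->
  0 < gamma ->
  Scal \subset SS ->
  \rank (colsubset Scal G) = #|Scal| ->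
  0 < r < 1 ->
  (forall l, l \in SS -> exists2 q, q \in Scal &
     1 - r < `|\sum_i Num.conj (G i q) * G i l|) ->
  is_pinv (colsubset SS G) X ->
  is_pinv (colsubset Scal G) Y ->
  (forall j, j \notin SS -> rho_star j 0 = 0) ->
  (forall rho : 'cV[C]_N, (forall j, j \notin SS -> rho j 0 = 0) ->
     lassoL G d gamma rho_star <= lassoL G d gamma rho) ->
  in_subdiff_l1 (restr SS rho_star) xi ->
  ctrmx (colsubset SS G) *m colsubset SS G *m (restr SS rho_star - X *m d)
    + gamma *: xi = 0 ->
  sqrtC (2 * r) * norm1 (restr SS rho_star - X *m d)
    + norminf (ctrmx (colsubset (~: SS) G) *m (colsubset SS G *m X *m d - d))
  < gamma * (1 - \big[Num.max/0]_(j in ~: SS)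
       `|(ctrmx (restr Scal (extend xi)) *m Y *m col j G) 0 0|) ->
  forall rho : 'cV[C]_N, lassoL G d gamma rho_star <= lassoL G d gamma rho.
Proof.
move=> G_unit gamma_gt0 Scal_sub _ /andP[_ r_lt1] Scal_close X_pinv Y_pinv supp _
  xi_subdiff kkt certificate.
have [x [x_subdiff x_opt]] := exists_full_subgradient G_unit gamma_gt0 Scal_sub r_lt1
  Scal_close X_pinv Y_pinv supp xi_subdiff kkt certificate.
exact: lasso_min_of_subgradient (ltW gamma_gt0) x_subdiff x_opt.
Qed.
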